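(* Suppose $g\in\mathcal{B}\setminus\mathcal{B}_0$. Then there exist $\delta\in(0,\pi/8)$, an increasing sequence $(r_n)_n$ in $(0,1)$ with $\lim_{n\to\infty}r_n=1$, and a sequence $(t_n)_n$ in $[0,2\pi)$ such that for every $n\in\mathbb{N}$ and every $t\in[-\delta(1-r_n),\delta(1-r_n)]$, $$(1-r_n)\,|g'(r_ne^{i(t_n+t)})|\ge\delta.$$
   Context: The Bloch space $\mathcal{B}$ consists of analytic $f$ on the unit disk $\mathbb{D}$ with $\sup_{z\in\mathbb{D}}(1-|z|^2)|f'(z)|<\infty$, and the little Bloch space $\mathcal{B}_0$ of those with $\lim_{|z|\to1^-}(1-|z|^2)|f'(z)|=0$. *)

From Stdlib Require Import Reals.
From Coquelicot Require Import Coquelicot.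
Open Scope R_scope.

Definition in_disk (z : C) : Prop := Cmod z < 1.

Definition deriv_on_disk (f f' : C -> C) : Prop :=
  forall z : C, in_disk z -> is_derive (K:=C_AbsRing) (V:=C_NormedModule) f z (f' z).

Definition bloch (f f' : C -> C) : Prop :=
  deriv_on_disk f f' /\
  exists M : R, forall z : C, in_disk z -> (1 - Cmod z ^ 2) * Cmod (f' z) <= M.

Definition little_bloch (f f' : C -> C) : Prop :=
  deriv_on_disk f f' /\
  forall eps : R, 0 < eps -> exists rho : R, rho < 1 /\
    forall z : C, rho < Cmod z -> Cmod z < 1 -> (1 - Cmod z ^ 2) * Cmod (f' z) < eps.

Definition polar (r theta : R) : C := (r * cos theta, r * sin theta).

(* Since [g] is not in the little Bloch space, there are points [z_n = r_n e^(i t_n)] with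
   [r_n] increasing to 1 and [(1 - r_n^2) |g'(z_n)| >= eps].  With [d = 1 - r_n], the Bloch
   bound gives [|g'| <= 2M/d] on the disc of radius [d/2] about [z_n], and Cauchy's formula
   for [g'] turns this into [|g'(z) - g'(z_n)| <= 8 M |z - z_n| / d^2] for [|z - z_n| <= d/4].
   On the arc [|t - t_n| <= delta d] this keeps [d |g'|] above [eps/2 - 16 M delta >= delta].

   Only the pointwise complex derivative of [g] is available, so Cauchy's formula is proved
   from scratch: Goursat's quadrisection argument shows that [g(w) / (w - x)^2] has zero
   integral over the boundary of every polar rectangle [{x + u e^(iv) | 0 < a <= u <= b,
   c <= v <= d}]; hence its integral over the circle [|w - x| = rho] does not depend on
   [rho], and letting [rho -> 0] identifies it with [2 pi i g'(x)]. *)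

From Stdlib Require Import Reals Lra ClassicalEpsilon.
From Coquelicot Require Import Coquelicot.
Open Scope R_scope.

Definition expi (v : R) : C := (cos v, sin v).

Lemma polar_expi r v : polar r v = (RtoC r * expi v)%C.
Proof. unfold polar, expi, RtoC, Cmult; simpl; f_equal; ring. Qed.

Lemma Cmod_expi v : Cmod (expi v) = 1.
Proof.
  unfold Cmod, expi; simpl. pose proof (sin2_cos2 v) as H. unfold Rsqr in H.
  replace (cos v * (cos v * 1) + sin v * (sin v * 1)) with 1 by lra. apply sqrt_1.
Qed.

Lemma Cmod_polar r v : 0 <= r -> Cmod (polar r v) = r.
Proof. intros Hr. rewrite polar_expi, Cmod_mult, Cmod_expi, Cmod_R, Rabs_pos_eq; lra. Qed.

Lemma expi_opp_mul v : (expi (- v) * expi v)%C = 1%C.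
Proof.
  unfold expi, Cmult; simpl. rewrite cos_neg, sin_neg.
  pose proof (sin2_cos2 v) as H. unfold Rsqr in H. unfold RtoC. f_equal; lra.
Qed.

Lemma expi_neq0 v : expi v <> 0%C.
Proof. intros H. apply C1_nz. rewrite <- (expi_opp_mul v), H. ring. Qed.

Lemma RtoC_neq0 (r : R) : r <> 0 -> RtoC r <> 0%C.
Proof. intros Hr E. apply Hr. exact (f_equal fst E). Qed.

Lemma expi_opp v : expi (- v) = (/ expi v)%C.
Proof.
  rewrite <- (Cmult_1_r (expi (- v))), <- (Cinv_r (expi v)) by apply expi_neq0.
  rewrite Cmult_assoc, expi_opp_mul. ring.
Qed.

Lemma polar_2PI u : polar u (2 * PI) = polar u 0.
Proof. unfold polar. rewrite cos_2PI, sin_2PI, cos_0, sin_0. reflexivity. Qed.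

Lemma expi_opp_2PI : expi (- (2 * PI)) = expi (- 0).
Proof.
  unfold expi. rewrite Ropp_0, cos_neg, sin_neg, cos_2PI, sin_2PI, cos_0, sin_0, Ropp_0.
  reflexivity.
Qed.

Lemma Cmod_pair_le (a b : R) : Cmod (a, b) <= Rabs a + Rabs b.
Proof.
  replace (a, b) with (RtoC a + Ci * RtoC b)%C
    by (unfold RtoC, Ci, Cplus, Cmult; simpl; f_equal; ring).
  eapply Rle_trans; [apply Cmod_triangle|].
  rewrite Cmod_mult, Cmod_Ci, !Cmod_R. lra.
Qed.

Lemma Rabs_sub_le_of_derive (f df : R -> R) (v w : R) :
  (forall t, is_derive f t (df t)) -> (forall t, Rabs (df t) <= 1) ->
  Rabs (f v - f w) <= Rabs (v - w).
Proof.
  intros Hd Hb. destruct (MVT_gen f w v df) as [c [_ Hc]].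
  - intros t _; apply Hd.
  - intros t _. apply continuity_pt_filterlim, (ex_derive_continuous f). eexists; apply Hd.
  - rewrite Hc, Rabs_mult. pose proof (Hb c). pose proof (Rabs_pos (v - w)). nra.
Qed.

Lemma Cmod_alternating_sum_le (p q r s : C) :
  Cmod (p - q + r - s)%C <= Cmod p + Cmod q + Cmod r + Cmod s.
Proof.
  unfold Cminus. rewrite <- (Cmod_opp q), <- (Cmod_opp s).
  eapply Rle_trans; [apply Cmod_triangle|]. apply Rplus_le_compat_r.
  eapply Rle_trans; [apply Cmod_triangle|]. apply Rplus_le_compat_r.
  apply Cmod_triangle.
Qed.

Lemma expi_lipschitz v w : Cmod (expi v - expi w) <= 2 * Rabs (v - w).
Proof.
  unfold expi, Cminus, Cplus, Copp; simpl.
  eapply Rle_trans; [apply Cmod_pair_le|].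
  assert (Hc : Rabs (cos v - cos w) <= Rabs (v - w)).
  { apply (Rabs_sub_le_of_derive cos (fun t => - sin t)).
    - intros; apply is_derive_Reals, derivable_pt_lim_cos.
    - intros t. rewrite Rabs_Ropp. apply Rabs_le. pose proof (SIN_bound t). lra. }
  assert (Hs : Rabs (sin v - sin w) <= Rabs (v - w)).
  { apply (Rabs_sub_le_of_derive sin cos).
    - intros; apply is_derive_Reals, derivable_pt_lim_sin.
    - intros t. apply Rabs_le. pose proof (COS_bound t). lra. }
  unfold Rminus in *. lra.
Qed.

Lemma Cmod_polar_sub_le u v u0 v0 : 0 <= u0 ->
  Cmod (polar u v - polar u0 v0) <= Rabs (u - u0) + 2 * u0 * Rabs (v - v0).
Proof.
  intros Hu0. rewrite !polar_expi.
  replace (RtoC u * expi v - RtoC u0 * expi v0)%C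
    with (RtoC (u - u0) * expi v + RtoC u0 * (expi v - expi v0))%C
    by (rewrite RtoC_minus; ring).
  eapply Rle_trans; [apply Cmod_triangle|].
  rewrite !Cmod_mult, Cmod_expi, !Cmod_R, (Rabs_pos_eq u0) by lra.
  pose proof (expi_lipschitz v v0). nra.
Qed.

Lemma cos_sin_onto (x y : R) : x ^ 2 + y ^ 2 = 1 ->
  exists t, 0 <= t < 2 * PI /\ cos t = x /\ sin t = y.
Proof.
  intros Hxy. pose proof PI_RGT_0.
  assert (Hx : -1 <= x <= 1) by (split; nra).
  assert (Hs : sin (acos x) = Rabs y).
  { rewrite sin_acos by lra. rewrite <- sqrt_Rsqr_abs. f_equal. unfold Rsqr. nra. }
  pose proof (acos_bound x).
  destruct (Rle_lt_dec 0 y) as [Hy | Hy].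
  - exists (acos x). rewrite cos_acos, Hs, Rabs_pos_eq by lra. repeat split; lra.
  - assert (Hpos : 0 < acos x).
    { destruct (Req_dec (acos x) 0) as [E | E]; [|lra].
      rewrite E, sin_0 in Hs. pose proof (Rabs_pos_lt y). lra. }
    exists (2 * PI - acos x).
    rewrite cos_minus, sin_minus, cos_2PI, sin_2PI, cos_acos, Hs, Rabs_left by lra.
    repeat split; lra.
Qed.

Lemma polar_repr (z : C) : z <> 0%C -> exists t, 0 <= t < 2 * PI /\ z = polar (Cmod z) t.
Proof.
  intros Hz. destruct z as [x y]. set (r := Cmod (x, y)).
  assert (Hr : 0 < r) by (apply Cmod_gt_0; exact Hz).
  assert (Hr2 : r ^ 2 = x ^ 2 + y ^ 2)
    by (unfold r, Cmod; simpl fst; simpl snd; rewrite pow2_sqrt; nra).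
  destruct (cos_sin_onto (x / r) (y / r)) as [t [Ht [Hc Hs]]].
  { field_simplify; [rewrite <- Hr2; field|]; lra. }
  exists t. split; [exact Ht|]. unfold polar. rewrite Hc, Hs. f_equal; field; lra.
Qed.

Lemma is_derive_C_approx (f : C -> C) (z l : C) :
  is_derive (K:=C_AbsRing) (V:=C_NormedModule) f z l ->
  forall eps, 0 < eps -> exists del, 0 < del /\ forall w : C, Cmod (w - z) < del ->
    Cmod (f w - f z - (w - z) * l)%C <= eps * Cmod (w - z).
Proof.
  intros [_ H] eps Heps.
  destruct (H z (fun P HP => HP) (mkposreal eps Heps)) as [del Hd].
  exists del; split; [apply cond_pos | exact Hd].
Qed.

(* [RInt] uses the product uniform structure [C_UniformSpace], while complex derivatives
   and [mult] live on the [Cmod]-metric structure of [C_AbsRing]; both have the same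
   neighbourhoods. *)
Notation Ccont f t := (continuous (U:=AbsRing_UniformSpace C_AbsRing) f t).

Lemma locally_C_Cmod (z : C) (P : C -> Prop) :
  locally (T:=C_UniformSpace) z P <-> locally (T:=AbsRing_UniformSpace C_AbsRing) z P.
Proof.
  assert (Hs2 : 0 < sqrt 2) by (apply sqrt_lt_R0; lra).
  split; intros [eps He].
  - exists eps; intros y Hy; apply He, C_NormedModule_mixin_compat1, Hy.
  - exists (mkposreal _ (Rdiv_lt_0_compat _ _ (cond_pos eps) Hs2)); intros y Hy. apply He.
    pose proof (C_NormedModule_mixin_compat2 z y _ Hy) as H; simpl in H.
    change (Cmod (minus y z) < eps).
    replace (pos eps) with (sqrt 2 * (eps / sqrt 2)) by (field; lra). exact H.
Qed.

Lemma Ccont_of_continuous {T : UniformSpace} (f : T -> C) t :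
  continuous (U:=C_UniformSpace) f t -> continuous (U:=AbsRing_UniformSpace C_AbsRing) f t.
Proof. intros H P HP. apply H, locally_C_Cmod, HP. Qed.

Lemma continuous_of_Ccont (f : R -> C) t : Ccont f t -> continuous (U:=C_UniformSpace) f t.
Proof. intros H P HP. apply H, locally_C_Cmod, HP. Qed.

Lemma Ccont_mult (f h : R -> C) t : Ccont f t -> Ccont h t -> Ccont (fun t => f t * h t)%C t.
Proof. intros; apply (continuous_mult (K:=C_AbsRing)); assumption. Qed.

Lemma Ccont_plus (f h : R -> C) t : Ccont f t -> Ccont h t -> Ccont (fun t => f t + h t)%C t.
Proof. intros; apply (continuous_plus (V:=AbsRing_NormedModule C_AbsRing)); assumption. Qed.

Lemma Ccont_const (c : C) (t : R) : Ccont (fun _ => c) t.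
Proof. apply continuous_const. Qed.

Lemma Ccont_comp_derive (g : C -> C) (l : C) (f : R -> C) t :
  is_derive (K:=C_AbsRing) (V:=C_NormedModule) g (f t) l -> Ccont f t -> Ccont (fun t => g (f t)) t.
Proof.
  intros Hd Hf.
  apply (continuous_comp (V:=AbsRing_UniformSpace C_AbsRing)); [exact Hf|].
  apply Ccont_of_continuous, (ex_derive_continuous (K:=C_AbsRing) (V:=C_NormedModule)).
  exists l; exact Hd.
Qed.

Lemma Ccont_pair (f1 f2 : R -> R) t :
  continuous f1 t -> continuous f2 t -> Ccont (fun t => (f1 t, f2 t)) t.
Proof.
  intros H1 H2. apply Ccont_of_continuous. intros P [eps HP].
  apply (filterlim_pair f1 f2 H1 H2).
  apply (Filter_prod _ _ _ (ball (f1 t) eps) (ball (f2 t) eps)); try apply locally_ball.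
  intros u v Hu Hv. apply HP. split; assumption.
Qed.

Lemma Ccont_RtoC (f : R -> R) t : continuous f t -> Ccont (fun t => RtoC (f t)) t.
Proof. intros H. apply Ccont_pair; [exact H | apply continuous_const]. Qed.

Lemma Ccont_expi_opp v : Ccont (fun v => expi (- v)) v.
Proof.
  unfold expi. apply Ccont_pair; apply continuity_pt_filterlim;
    [apply (continuity_pt_comp Ropp cos) | apply (continuity_pt_comp Ropp sin)];
    try apply continuity_pt_opp, continuity_pt_id; auto using continuity_cos, continuity_sin.
Qed.

Definition CInt (f : R -> C) (a b : R) : C := RInt (V:=C_R_CompleteNormedModule) f a b.
Notation is_CInt f a b l := (is_RInt (V:=C_R_NormedModule) f a b l).
Notation ex_CInt f a b := (ex_RInt (V:=C_R_CompleteNormedModule) f a b).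

Lemma ex_CInt_continuous (f : R -> C) a b :
  (forall t, Rmin a b <= t <= Rmax a b -> Ccont f t) -> ex_CInt f a b.
Proof. intros H. apply ex_RInt_continuous. intros t Ht. apply continuous_of_Ccont, H, Ht. Qed.

Lemma CInt_correct (f : R -> C) a b : ex_CInt f a b -> is_CInt f a b (CInt f a b).
Proof. apply (RInt_correct (V:=C_R_CompleteNormedModule)). Qed.

Lemma CInt_Chasles (f : R -> C) a b c : ex_CInt f a b -> ex_CInt f b c ->
  (CInt f a b + CInt f b c)%C = CInt f a c.
Proof. apply (RInt_Chasles (V:=C_R_CompleteNormedModule)). Qed.

Lemma Cmod_norm (z : C) : norm (K:=R_AbsRing) (V:=C_R_NormedModule) z = Cmod z.
Proof.
  unfold norm; simpl. unfold prod_norm, Cmod; simpl. unfold abs; simpl.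
  change (norm (fst z)) with (Rabs (fst z)); change (norm (snd z)) with (Rabs (snd z)).
  rewrite !Rmult_1_r, <- !Rabs_mult, !Rabs_pos_eq by apply Rle_0_sqr. reflexivity.
Qed.

Lemma Cmod_is_CInt_le (f : R -> C) a b (l : C) M : a <= b -> is_CInt f a b l ->
  (forall t, a <= t <= b -> Cmod (f t) <= M) -> Cmod l <= M * (b - a).
Proof.
  intros Hab Hf HM. rewrite <- Cmod_norm.
  apply (norm_RInt_le f (fun _ => M) a b l); [exact Hab | | exact Hf |].
  - intros t Ht. rewrite Cmod_norm. apply HM, Ht.
  - replace (M * (b - a)) with (scal (b - a) M) by (unfold scal; simpl; unfold mult; simpl; ring).
    apply (is_RInt_const (V:=R_NormedModule)).
Qed.

Lemma is_CInt_plus (f h : R -> C) a b (l1 l2 : C) : is_CInt f a b l1 -> is_CInt h a b l2 ->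
  is_CInt (fun t => f t + h t)%C a b (l1 + l2)%C.
Proof. intros H1 H2. exact (is_RInt_plus _ _ a b _ _ H1 H2). Qed.

Lemma is_CInt_minus (f h : R -> C) a b l1 l2 : is_CInt f a b l1 -> is_CInt h a b l2 ->
  is_CInt (fun t => f t - h t)%C a b (l1 - l2)%C.
Proof. intros H1 H2. exact (is_RInt_minus _ _ a b _ _ H1 H2). Qed.

Lemma is_CInt_pair (f1 f2 : R -> R) a b l1 l2 : is_RInt f1 a b l1 -> is_RInt f2 a b l2 ->
  is_CInt (fun t => (f1 t, f2 t)) a b (l1, l2).
Proof.
  intros H1 H2.
  exact (is_RInt_fct_extend_pair (U:=R_NormedModule) (V:=R_NormedModule)
           (fun t => (f1 t, f2 t)) a b l1 l2 H1 H2).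
Qed.

Lemma is_CInt_mult_l (c : C) (f : R -> C) a b l :
  is_CInt f a b l -> is_CInt (fun t => c * f t)%C a b (c * l)%C.
Proof.
  intros H. destruct c as [c1 c2], l as [l1 l2].
  pose proof (is_RInt_fct_extend_fst (U:=R_NormedModule) (V:=R_NormedModule) f a b _ H) as H1.
  pose proof (is_RInt_fct_extend_snd (U:=R_NormedModule) (V:=R_NormedModule) f a b _ H) as H2.
  simpl in H1, H2.
  apply is_RInt_ext with (fun t => (c1 * fst (f t) + (- c2) * snd (f t),
                                    c1 * snd (f t) + c2 * fst (f t))).
  { intros t _. unfold Cmult; simpl. f_equal; ring. }
  replace ((c1, c2) * (l1, l2))%C with (c1 * l1 + (- c2) * l2, c1 * l2 + c2 * l1)
    by (unfold Cmult; simpl; f_equal; ring).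
  apply is_CInt_pair.
  - exact (is_RInt_plus _ _ a b _ _ (is_RInt_scal _ a b c1 _ H1) (is_RInt_scal _ a b (- c2) _ H2)).
  - exact (is_RInt_plus _ _ a b _ _ (is_RInt_scal _ a b c1 _ H2) (is_RInt_scal _ a b c2 _ H1)).
Qed.

Lemma is_CInt_RtoC (f : R -> R) a b l :
  is_RInt f a b l -> is_CInt (fun t => RtoC (f t)) a b (RtoC l).
Proof.
  intros H. apply is_CInt_pair; [exact H|].
  pose proof (is_RInt_const (V:=R_NormedModule) a b 0) as H0.
  replace (scal (b - a) (0 : R_NormedModule)) with 0 in H0 by (change (0 = (b - a) * 0); ring).
  exact H0.
Qed.

Lemma is_CInt_const (c : C) a b : is_CInt (fun _ => c) a b (RtoC (b - a) * c)%C.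
Proof.
  replace (RtoC (b - a) * c)%C with (scal (V:=C_R_NormedModule) (b - a) c)
    by (destruct c; unfold scal; simpl; unfold RtoC, Cmult, prod_scal; simpl;
        unfold scal; simpl; unfold mult; simpl; f_equal; ring).
  apply is_RInt_const.
Qed.

Lemma is_RInt_of_derive (F f : R -> R) a b :
  (forall t, Rmin a b <= t <= Rmax a b -> is_derive F t (f t)) ->
  (forall t, Rmin a b <= t <= Rmax a b -> continuous f t) ->
  is_RInt f a b (F b - F a).
Proof. exact (is_RInt_derive (V:=R_CompleteNormedModule) F f a b). Qed.

Lemma Rmin_Rmax_pos a b t : 0 < a -> 0 < b -> Rmin a b <= t <= Rmax a b -> 0 < t.
Proof. intros Ha Hb [Ht _]. eapply Rlt_le_trans; [|exact Ht]. apply Rmin_glb_lt; assumption. Qed.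

Lemma is_RInt_inv_sqr a b : 0 < a -> 0 < b -> is_RInt (fun u => / (u * u)) a b (/ a - / b).
Proof.
  intros Ha Hb. replace (/ a - / b) with ((- / b) - (- / a)) by ring.
  apply (is_RInt_of_derive (fun u => - / u)); intros t Ht;
    pose proof (Rmin_Rmax_pos a b t Ha Hb Ht).
  - auto_derive; [lra | field; lra].
  - apply (ex_derive_continuous (fun u => / (u * u))). auto_derive. nra.
Qed.

Lemma is_RInt_inv a b : 0 < a -> 0 < b -> is_RInt (fun u => / u) a b (ln b - ln a).
Proof.
  intros Ha Hb. apply is_RInt_of_derive; intros t Ht;
    pose proof (Rmin_Rmax_pos a b t Ha Hb Ht).
  - auto_derive; [lra | field; lra].
  - apply (ex_derive_continuous (fun u => / u)). auto_derive. lra.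
Qed.

Lemma is_CInt_Ci_expi_opp c d :
  is_CInt (fun v => Ci * expi (- v))%C c d (expi (- c) - expi (- d))%C.
Proof.
  replace (expi (- c) - expi (- d))%C with (- cos d - - cos c, sin d - sin c)
    by (unfold expi, Cminus, Cplus, Copp; rewrite !cos_neg, !sin_neg;
        apply (f_equal2 pair); simpl; ring).
  apply is_RInt_ext with (fun v => (sin v, cos v));
    [intros; unfold Ci, expi, Cmult; simpl; rewrite cos_neg, sin_neg; f_equal; ring|].
  apply is_CInt_pair.
  - apply (is_RInt_of_derive (fun v => - cos v) sin); intros t _.
    + auto_derive; [trivial | ring].
    + apply continuity_pt_filterlim, continuity_sin.
  - apply (is_RInt_of_derive sin cos); intros t _.
    + apply is_derive_Reals, derivable_pt_lim_sin.
    + apply continuity_pt_filterlim, continuity_cos.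
Qed.

Lemma nested_intervals_common_point (lo hi : nat -> R) :
  (forall n, lo n <= lo (S n)) -> (forall n, hi (S n) <= hi n) -> (forall n, lo n <= hi n) ->
  exists p, forall n, lo n <= p <= hi n.
Proof.
  intros Hlo Hhi Hle.
  assert (Hmono : forall n k, lo n <= lo (n + k)%nat /\ hi (n + k)%nat <= hi n).
  { intros n k; induction k as [|k IH]; rewrite ?Nat.add_0_r, ?Nat.add_succ_r; [lra|].
    pose proof (Hlo (n + k)%nat); pose proof (Hhi (n + k)%nat); lra. }
  assert (Hcross : forall n m, lo n <= hi m).
  { intros n m. destruct (Hmono n m) as [H1 _]. destruct (Hmono m n) as [_ H2].
    rewrite Nat.add_comm in H2. pose proof (Hle (n + m)%nat). lra. }
  destruct (completeness (fun y => exists n, y = lo n)) as [p [Hub Hlub]].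
  - exists (hi 0%nat). intros y [n ->]. apply Hcross.
  - exists (lo 0%nat), 0%nat. reflexivity.
  - exists p. intros n. split.
    + apply Hub. exists n. reflexivity.
    + apply Hlub. intros y [m ->]. apply Hcross.
Qed.

Record rect := Rect { ru0 : R; ru1 : R; rv0 : R; rv1 : R }.

Definition rect_size (Q : rect) : R := (ru1 Q - ru0 Q) + (rv1 Q - rv0 Q).

Definition subrect (Q' Q : rect) : Prop :=
  ru0 Q <= ru0 Q' /\ ru1 Q' <= ru1 Q /\ rv0 Q <= rv0 Q' /\ rv1 Q' <= rv1 Q.

Definition in_rect (u v : R) (Q : rect) : Prop := ru0 Q <= u <= ru1 Q /\ rv0 Q <= v <= rv1 Q.

Definition nondegenerate (Q : rect) : Prop := ru0 Q < ru1 Q /\ rv0 Q < rv1 Q.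

Definition quarter (i j : bool) (Q : rect) : rect :=
  let mu := (ru0 Q + ru1 Q) / 2 in let mv := (rv0 Q + rv1 Q) / 2 in
  Rect (if i then mu else ru0 Q) (if i then ru1 Q else mu)
       (if j then mv else rv0 Q) (if j then rv1 Q else mv).

Lemma quarter_subrect i j Q : nondegenerate Q -> subrect (quarter i j Q) Q.
Proof. intros [H1 H2]. unfold subrect; destruct i, j; simpl; lra. Qed.

Lemma quarter_nondegenerate i j Q : nondegenerate Q -> nondegenerate (quarter i j Q).
Proof. intros [H1 H2]. unfold nondegenerate; destruct i, j; simpl; lra. Qed.

Lemma quarter_size i j Q : rect_size (quarter i j Q) = rect_size Q / 2.
Proof. unfold rect_size; destruct i, j; simpl; field. Qed.

Lemma subrect_trans Q1 Q2 Q3 : subrect Q1 Q2 -> subrect Q2 Q3 -> subrect Q1 Q3.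
Proof. unfold subrect; lra. Qed.

Section Quadrisection.

Variables (F : rect -> R) (k : R) (Q0 : rect).

Hypothesis F_quarter_le : forall Q, subrect Q Q0 -> nondegenerate Q ->
  F Q <= F (quarter false false Q) + F (quarter true false Q)
         + F (quarter false true Q) + F (quarter true true Q).

Hypothesis F_local_bound : forall u v, in_rect u v Q0 -> exists del, 0 < del /\
  forall Q, subrect Q Q0 -> in_rect u v Q -> rect_size Q < del -> F Q <= k * rect_size Q ^ 2.

Let bad (Q : rect) : Prop :=
  subrect Q Q0 /\ nondegenerate Q /\ k * rect_size Q ^ 2 < F Q.

Lemma bad_quarter Q : bad Q -> exists i j, bad (quarter i j Q).
Proof.
  intros [Hsub [Hnd HF]].
  assert (Hq : forall i j, subrect (quarter i j Q) Q0 /\ nondegenerate (quarter i j Q))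
    by (intros; split; [eapply subrect_trans; [apply quarter_subrect|]|apply quarter_nondegenerate];
        assumption).
  assert (Hk : forall i j, k * rect_size (quarter i j Q) ^ 2 = k * rect_size Q ^ 2 / 4)
    by (intros; rewrite quarter_size; field).
  apply NNPP; intros Hno.
  assert (Hgood : forall i j, F (quarter i j Q) <= k * rect_size Q ^ 2 / 4).
  { intros i j. rewrite <- (Hk i j). apply Rnot_lt_le. intros Hlt.
    apply Hno. exists i, j. destruct (Hq i j) as [Hs Hn]. exact (conj Hs (conj Hn Hlt)). }
  pose proof (F_quarter_le Q Hsub Hnd).
  pose proof (Hgood false false); pose proof (Hgood true false);
  pose proof (Hgood false true); pose proof (Hgood true true). lra.
Qed.

Lemma bad_sequence : bad Q0 -> exists Qs : nat -> rect, (forall n, bad (Qs n)) /\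
  forall n, subrect (Qs (S n)) (Qs n) /\ rect_size (Qs (S n)) = rect_size (Qs n) / 2.
Proof.
  intros Hbad0.
  set (next := fun Q => epsilon (inhabits Q0)
                  (fun Q' => bad Q' /\ exists i j, Q' = quarter i j Q)).
  assert (Hnext : forall Q, bad Q -> bad (next Q) /\ exists i j, next Q = quarter i j Q).
  { intros Q HQ. apply (epsilon_spec (inhabits Q0)).
    destruct (bad_quarter Q HQ) as [i [j Hij]]. exists (quarter i j Q).
    split; [exact Hij|]. exists i, j. reflexivity. }
  set (Qs := fun n => Nat.iter n next Q0).
  assert (Hbad : forall n, bad (Qs n)).
  { induction n as [|n IH]; [exact Hbad0|]. apply (Hnext _ IH). }
  exists Qs. split; [exact Hbad|]. intros n.
  destruct (Hnext _ (Hbad n)) as [_ [i [j Hij]]].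
  change (Qs (S n)) with (next (Qs n)). rewrite Hij.
  split; [apply quarter_subrect, Hbad | apply quarter_size].
Qed.

Lemma quadrisection_bound : nondegenerate Q0 -> F Q0 <= k * rect_size Q0 ^ 2.
Proof.
  intros Hnd0. apply Rnot_lt_le. intros HF0.
  destruct bad_sequence as [Qs [Hbad Hstep]];
    [destruct Hnd0; unfold bad, subrect, nondegenerate; repeat split; lra|].
  assert (Hsize : forall n, rect_size (Qs n) = rect_size (Qs 0%nat) * (/ 2) ^ n).
  { induction n as [|n IH]; simpl pow; [ring|].
    rewrite (proj2 (Hstep n)), IH. field. }
  destruct (nested_intervals_common_point (fun n => ru0 (Qs n)) (fun n => ru1 (Qs n)))
    as [u Hu]; try (intros n; destruct (Hstep n) as [[? [? ?]] _]; lra).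
  { intros n. destruct (Hbad n) as [_ [[? ?] _]]. lra. }
  destruct (nested_intervals_common_point (fun n => rv0 (Qs n)) (fun n => rv1 (Qs n)))
    as [v Hv]; try (intros n; destruct (Hstep n) as [[? [? [? ?]]] _]; lra).
  { intros n. destruct (Hbad n) as [_ [[? ?] _]]. lra. }
  destruct (Hbad 0%nat) as [Hsub0 [[Hu0 Hv0] _]].
  destruct (F_local_bound u v) as [del [Hdel Hloc]];
    [specialize (Hu 0%nat); specialize (Hv 0%nat); unfold in_rect, subrect in *; lra|].
  assert (Hs0 : 0 < rect_size (Qs 0%nat)) by (unfold rect_size; lra).
  destruct (pow_lt_1_zero (/ 2) ltac:(rewrite Rabs_pos_eq; lra) (del / rect_size (Qs 0%nat))
              ltac:(apply Rdiv_lt_0_compat; lra)) as [N HN].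
  specialize (HN N (Nat.le_refl N)). rewrite Rabs_pos_eq in HN by (apply pow_le; lra).
  destruct (Hbad N) as [HsubN [_ HFN]].
  assert (HsN : rect_size (Qs N) < del).
  { rewrite Hsize. apply Rlt_le_trans with (rect_size (Qs 0%nat) * (del / rect_size (Qs 0%nat))).
    - apply Rmult_lt_compat_l; assumption.
    - right; field; lra. }
  pose proof (Hloc (Qs N) HsubN (conj (Hu N) (Hv N)) HsN). lra.
Qed.

End Quadrisection.

Definition radial_integrand (g : C -> C) (x : C) (v u : R) : C :=
  (g (x + polar u v) * expi (- v) * RtoC (/ (u * u)))%C.

Definition angular_integrand (g : C -> C) (x : C) (u v : R) : C :=
  (Ci * g (x + polar u v) * expi (- v) * RtoC (/ u))%C.

(* The integral of [g(w) / (w - x)^2 dw] over the positively oriented boundary of the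
   polar rectangle [{x + u e^(iv) | a <= u <= b, c <= v <= d}]: on the radial edges
   [dw = e^(iv) du], on the circular edges [dw = i u e^(iv) dv]. *)
Definition polar_boundary_integral (g : C -> C) (x : C) (a b c d : R) : C :=
  (CInt (radial_integrand g x c) a b - CInt (radial_integrand g x d) a b
   + CInt (angular_integrand g x b) c d - CInt (angular_integrand g x a) c d)%C.

Lemma Ccont_polar_radius (x : C) u v : Ccont (fun u => x + polar u v)%C u.
Proof.
  apply Ccont_plus; [apply Ccont_const|]. unfold polar.
  apply Ccont_pair; apply (ex_derive_continuous (fun u => u * _)); auto_derive; trivial.
Qed.

Lemma Ccont_polar_angle (x : C) u v : Ccont (fun v => x + polar u v)%C v.
Proof.
  apply Ccont_plus; [apply Ccont_const|]. unfold polar.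
  apply Ccont_pair; apply (ex_derive_continuous (fun v => _ * _ v)); auto_derive; trivial.
Qed.

Section Polar_Goursat.

Variables (g g' : C -> C) (x : C) (rho : R).

Hypothesis g_derive : forall w, Cmod (w - x) <= rho ->
  is_derive (K:=C_AbsRing) (V:=C_NormedModule) g w (g' w).

Lemma g_derive_polar u v : 0 <= u <= rho ->
  is_derive (K:=C_AbsRing) (V:=C_NormedModule) g (x + polar u v)%C (g' (x + polar u v)%C).
Proof.
  intros Hu. apply g_derive.
  replace (x + polar u v - x)%C with (polar u v) by ring. rewrite Cmod_polar; lra.
Qed.

Lemma ex_CInt_radial v a b : 0 < a -> a <= b <= rho -> ex_CInt (radial_integrand g x v) a b.
Proof.
  intros Ha Hb. apply ex_CInt_continuous.
  rewrite Rmin_left, Rmax_right by lra. intros u Hu. unfold radial_integrand.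
  apply Ccont_mult; [apply Ccont_mult|].
  - apply (Ccont_comp_derive g (g' (x + polar u v)%C));
      [apply g_derive_polar; lra | apply Ccont_polar_radius].
  - apply Ccont_const.
  - apply Ccont_RtoC, (ex_derive_continuous (fun u => / (u * u))). auto_derive. nra.
Qed.

Lemma ex_CInt_angular u c d : 0 < u <= rho -> ex_CInt (angular_integrand g x u) c d.
Proof.
  intros Hu. apply ex_CInt_continuous. intros v _. unfold angular_integrand.
  apply Ccont_mult; [apply Ccont_mult; [apply Ccont_mult|]|].
  - apply Ccont_const.
  - apply (Ccont_comp_derive g (g' (x + polar u v)%C));
      [apply g_derive_polar; lra | apply Ccont_polar_angle].
  - apply Ccont_expi_opp.
  - apply Ccont_const.
Qed.

Lemma polar_boundary_integral_quarter a b c d : 0 < a -> a <= b <= rho ->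
  let m := (a + b) / 2 in let n := (c + d) / 2 in
  polar_boundary_integral g x a b c d =
  (polar_boundary_integral g x a m c n + polar_boundary_integral g x m b c n
   + polar_boundary_integral g x a m n d + polar_boundary_integral g x m b n d)%C.
Proof.
  intros Ha Hb m n. unfold polar_boundary_integral.
  assert (Hm : a <= m <= b) by (unfold m; lra).
  assert (Hrad : forall v,
            ex_CInt (radial_integrand g x v) a m /\ ex_CInt (radial_integrand g x v) m b)
    by (intros v; split; apply ex_CInt_radial; lra).
  assert (Hang : forall u, a <= u <= b -> forall c d, ex_CInt (angular_integrand g x u) c d)
    by (intros u Hu c' d'; apply ex_CInt_angular; lra).
  rewrite <- (CInt_Chasles _ a m b (proj1 (Hrad c)) (proj2 (Hrad c))),
          <- (CInt_Chasles _ a m b (proj1 (Hrad d)) (proj2 (Hrad d))),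
          <- (CInt_Chasles _ c n d (Hang a ltac:(lra) c n) (Hang a ltac:(lra) n d)),
          <- (CInt_Chasles _ c n d (Hang b ltac:(lra) c n) (Hang b ltac:(lra) n d)).
  ring.
Qed.

Lemma radial_integral_near_affine (A l : C) (eta : R) v a b : 0 < a -> a <= b <= rho ->
  (forall u, a <= u <= b -> Cmod (g (x + polar u v) - A - l * polar u v)%C <= eta) ->
  Cmod (CInt (radial_integrand g x v) a b
        - (A * expi (- v) * RtoC (/ a - / b) + l * RtoC (ln b - ln a)))%C
  <= eta / (a * a) * (b - a).
Proof.
  intros Ha Hb Hnear.
  assert (Haff : is_CInt (fun u => A * expi (- v) * RtoC (/ (u * u)) + l * RtoC (/ u))%C a b
                   (A * expi (- v) * RtoC (/ a - / b) + l * RtoC (ln b - ln a))%C).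
  { apply is_CInt_plus; apply is_CInt_mult_l, is_CInt_RtoC;
      [apply is_RInt_inv_sqr | apply is_RInt_inv]; lra. }
  apply (Cmod_is_CInt_le _ a b _ _ (proj1 Hb) (is_CInt_minus _ _ _ _ _ _
           (CInt_correct _ _ _ (ex_CInt_radial v a b Ha Hb)) Haff)).
  intros u Hu.
  replace (radial_integrand g x v u - (A * expi (- v) * RtoC (/ (u * u)) + l * RtoC (/ u)))%C
    with ((g (x + polar u v) - A - l * polar u v) * expi (- v) * RtoC (/ (u * u)))%C.
  2: { unfold radial_integrand. rewrite polar_expi, expi_opp, !RtoC_inv, RtoC_mult by nra.
       field. split; first [apply expi_neq0 | apply RtoC_neq0; lra]. }
  rewrite !Cmod_mult, Cmod_expi, Cmod_R, Rabs_pos_eq by (apply Rlt_le, Rinv_0_lt_compat; nra).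
  rewrite Rmult_1_r. apply Rmult_le_compat.
  - apply Cmod_ge_0.
  - apply Rlt_le, Rinv_0_lt_compat; nra.
  - apply Hnear, Hu.
  - apply Rinv_le_contravar; nra.
Qed.

Lemma angular_integral_near_affine (A l : C) (eta : R) u c d : 0 < u <= rho -> c <= d ->
  (forall v, c <= v <= d -> Cmod (g (x + polar u v) - A - l * polar u v)%C <= eta) ->
  Cmod (CInt (angular_integrand g x u) c d
        - (A * RtoC (/ u) * (expi (- c) - expi (- d)) + RtoC (d - c) * (Ci * l)))%C
  <= eta / u * (d - c).
Proof.
  intros Hu Hcd Hnear.
  assert (Haff : is_CInt (fun v => A * RtoC (/ u) * (Ci * expi (- v)) + Ci * l)%C c d
                   (A * RtoC (/ u) * (expi (- c) - expi (- d)) + RtoC (d - c) * (Ci * l))%C).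
  { apply is_CInt_plus; [apply is_CInt_mult_l, is_CInt_Ci_expi_opp | apply is_CInt_const]. }
  apply (Cmod_is_CInt_le _ c d _ _ Hcd (is_CInt_minus _ _ _ _ _ _
           (CInt_correct _ _ _ (ex_CInt_angular u c d Hu)) Haff)).
  intros v Hv.
  replace (angular_integrand g x u v - (A * RtoC (/ u) * (Ci * expi (- v)) + Ci * l))%C
    with (Ci * (g (x + polar u v) - A - l * polar u v) * expi (- v) * RtoC (/ u))%C.
  2: { unfold angular_integrand. rewrite polar_expi, expi_opp, RtoC_inv by lra.
       field. split; first [apply expi_neq0 | apply RtoC_neq0; lra]. }
  rewrite !Cmod_mult, Cmod_Ci, Cmod_expi, Cmod_R, Rabs_pos_eq
    by (apply Rlt_le, Rinv_0_lt_compat; lra).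
  rewrite Rmult_1_l, Rmult_1_r. unfold Rdiv.
  apply Rmult_le_compat_r; [apply Rlt_le, Rinv_0_lt_compat; lra | apply Hnear, Hv].
Qed.

(* The affine part contributes [A / (w - x)^2 + l / (w - x)], whose four edge integrals
   cancel exactly. *)
Lemma polar_boundary_integral_near_affine (A l : C) (eta : R) a b c d :
  0 < a -> a <= b <= rho -> c <= d ->
  (forall u v, a <= u <= b -> c <= v <= d ->
     Cmod (g (x + polar u v) - A - l * polar u v)%C <= eta) ->
  Cmod (polar_boundary_integral g x a b c d) <= 2 * eta * ((b - a) / (a * a) + (d - c) / a).
Proof.
  intros Ha Hb Hcd Hnear.
  set (E_rad := fun v => (A * expi (- v) * RtoC (/ a - / b) + l * RtoC (ln b - ln a))%C).
  set (E_ang := fun u => (A * RtoC (/ u) * (expi (- c) - expi (- d)) + RtoC (d - c) * (Ci * l))%C).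
  pose proof (radial_integral_near_affine A l eta c a b Ha Hb
                ltac:(intros; apply Hnear; lra)) as Hc.
  pose proof (radial_integral_near_affine A l eta d a b Ha Hb
                ltac:(intros; apply Hnear; lra)) as Hd.
  pose proof (angular_integral_near_affine A l eta b c d ltac:(split; lra) Hcd
                ltac:(intros; apply Hnear; lra)) as Hb'.
  pose proof (angular_integral_near_affine A l eta a c d ltac:(split; lra) Hcd
                ltac:(intros; apply Hnear; lra)) as Ha'.
  fold (E_rad c) (E_rad d) (E_ang b) (E_ang a) in Hc, Hd, Hb', Ha'.
  assert (Hcancel : (E_rad c - E_rad d + E_ang b - E_ang a)%C = 0%C).
  { unfold E_rad, E_ang. rewrite (RtoC_minus (/ a)). ring. }
  replace (polar_boundary_integral g x a b c d) with
    ((CInt (radial_integrand g x c) a b - E_rad c) - (CInt (radial_integrand g x d) a b - E_rad d)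
     + (CInt (angular_integrand g x b) c d - E_ang b) - (CInt (angular_integrand g x a) c d - E_ang a)
     + (E_rad c - E_rad d + E_ang b - E_ang a))%C
    by (unfold polar_boundary_integral; ring).
  rewrite Hcancel, Cplus_0_r.
  eapply Rle_trans; [apply Cmod_alternating_sum_le|].
  assert (Hinv : eta / b <= eta / a).
  { assert (0 <= eta) by (eapply Rle_trans; [apply Cmod_ge_0 | apply (Hnear a c)]; lra).
    unfold Rdiv. apply Rmult_le_compat_l; [lra | apply Rinv_le_contravar; lra]. }
  unfold Rdiv in *. nra.
Qed.

Let goursat_const (a0 : R) : R := 2 * (1 + 2 * rho) * (/ (a0 * a0) + / a0).

Lemma polar_boundary_integral_local (a0 u0 v0 eps : R) : 0 < a0 <= u0 -> u0 <= rho -> 0 < eps ->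
  exists del, 0 < del /\ forall a b c d, a0 <= a <= u0 -> u0 <= b <= rho -> c <= v0 <= d ->
    (b - a) + (d - c) < del ->
    Cmod (polar_boundary_integral g x a b c d) <= eps * goursat_const a0 * ((b - a) + (d - c)) ^ 2.
Proof.
  intros Hu0 Hrho Heps.
  set (w0 := (x + polar u0 v0)%C). set (l := g' w0).
  destruct (is_derive_C_approx g w0 l (g_derive_polar u0 v0 ltac:(lra)) eps Heps)
    as [d1 [Hd1 Happrox]].
  assert (HL : 0 < 1 + 2 * rho) by lra.
  exists (d1 / (1 + 2 * rho)). split; [apply Rdiv_lt_0_compat; lra|].
  intros a b c d Ha Hb Hv Hs. set (s := (b - a) + (d - c)) in *.
  assert (Hnear : forall u v, a <= u <= b -> c <= v <= d ->
            Cmod (g (x + polar u v) - (g w0 - l * polar u0 v0) - l * polar u v)%C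
            <= eps * ((1 + 2 * rho) * s)).
  { intros u v Hu Hv'.
    assert (Hdist : Cmod (polar u v - polar u0 v0) <= (1 + 2 * rho) * s).
    { eapply Rle_trans; [apply Cmod_polar_sub_le; lra|].
      assert (Rabs (u - u0) <= s) by (apply Rabs_le; unfold s; lra).
      assert (Rabs (v - v0) <= s) by (apply Rabs_le; unfold s; lra).
      pose proof (Rabs_pos (v - v0)). nra. }
    assert (Hw : ((x + polar u v) - w0)%C = (polar u v - polar u0 v0)%C) by (unfold w0; ring).
    replace (g (x + polar u v) - (g w0 - l * polar u0 v0) - l * polar u v)%C
      with (g (x + polar u v) - g w0 - ((x + polar u v) - w0) * l)%C by (rewrite Hw; ring).
    eapply Rle_trans; [apply Happrox | rewrite Hw; apply Rmult_le_compat_l; lra].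
    rewrite Hw. eapply Rle_lt_trans; [exact Hdist|].
    apply Rlt_le_trans with ((1 + 2 * rho) * (d1 / (1 + 2 * rho))).
    - apply Rmult_lt_compat_l; assumption.
    - right; field; lra. }
  eapply Rle_trans;
    [apply (polar_boundary_integral_near_affine (g w0 - l * polar u0 v0)%C l
              (eps * ((1 + 2 * rho) * s)) a b c d); [lra | split; lra | lra | exact Hnear]|].
  assert (Hb_a : (b - a) / (a * a) <= s * / (a0 * a0))
    by (unfold Rdiv; apply Rmult_le_compat; unfold s; try lra;
        [apply Rlt_le, Rinv_0_lt_compat; nra | apply Rinv_le_contravar; nra]).
  assert (Hd_c : (d - c) / a <= s * / a0)
    by (unfold Rdiv; apply Rmult_le_compat; unfold s; try lra;
        [apply Rlt_le, Rinv_0_lt_compat; lra | apply Rinv_le_contravar; lra]).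
  assert (0 <= eps * ((1 + 2 * rho) * s)) by (apply Rmult_le_pos; [lra | apply Rmult_le_pos; unfold s; lra]).
  unfold goursat_const.
  apply Rle_trans with (2 * (eps * ((1 + 2 * rho) * s)) * (s * / (a0 * a0) + s * / a0)).
  - apply Rmult_le_compat_l; lra.
  - right; ring.
Qed.

Lemma polar_goursat a b c d : 0 < a < b -> b <= rho -> c < d ->
  polar_boundary_integral g x a b c d = 0%C.
Proof.
  intros Hab Hb Hcd.
  set (F := fun Q => Cmod (polar_boundary_integral g x (ru0 Q) (ru1 Q) (rv0 Q) (rv1 Q))).
  set (Q0 := Rect a b c d).
  assert (HK : 0 < goursat_const a * rect_size Q0 ^ 2).
  { unfold goursat_const, rect_size, Q0; cbn [ru0 ru1 rv0 rv1].
    assert (0 < / (a * a)) by (apply Rinv_0_lt_compat; nra).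
    assert (0 < / a) by (apply Rinv_0_lt_compat; lra).
    apply Rmult_lt_0_compat; [nra | apply pow_lt; lra]. }
  apply Cmod_eq_0, Rle_antisym; [|apply Cmod_ge_0].
  apply Rle_plus_epsilon. intros eps Heps. rewrite Rplus_0_l.
  set (K := goursat_const a * rect_size Q0 ^ 2) in HK.
  replace eps with (eps / K * K) by (field; lra).
  unfold K at 2. rewrite <- Rmult_assoc.
  apply (quadrisection_bound F _ Q0); [| | unfold Q0, nondegenerate; simpl; lra].
  - intros [a1 b1 c1 d1] Hsub Hnd. unfold subrect, nondegenerate, Q0 in *; simpl in *.
    unfold F; simpl. rewrite (polar_boundary_integral_quarter a1 b1 c1 d1) by lra.
    eapply Rle_trans; [apply Cmod_triangle|]. apply Rplus_le_compat_r.
    eapply Rle_trans; [apply Cmod_triangle|]. apply Rplus_le_compat_r.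
    apply Cmod_triangle.
  - intros u v [Hu Hv]. unfold Q0 in Hu, Hv; simpl in Hu, Hv.
    destruct (polar_boundary_integral_local a u v (eps / K))
      as [del [Hdel Hloc]]; try lra; [apply Rdiv_lt_0_compat; lra|].
    exists del. split; [exact Hdel|].
    intros [a1 b1 c1 d1] Hsub [Hu1 Hv1] Hsize. unfold subrect, rect_size, Q0 in *; simpl in *.
    apply Hloc; lra.
Qed.

Lemma angular_circle_integral_radius a : 0 < a < rho ->
  CInt (angular_integrand g x rho) 0 (2 * PI) = CInt (angular_integrand g x a) 0 (2 * PI).
Proof.
  intros Ha. pose proof PI_RGT_0.
  pose proof (polar_goursat a rho 0 (2 * PI) Ha (Rle_refl rho) ltac:(lra)) as HJ.
  unfold polar_boundary_integral in HJ.
  rewrite (RInt_ext (V:=C_R_CompleteNormedModule) (radial_integrand g x (2 * PI)) (radial_integrand g x 0))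
    in HJ by (intros; unfold radial_integrand; rewrite polar_2PI, expi_opp_2PI; reflexivity).
  fold (CInt (radial_integrand g x 0) a rho) in HJ.
  set (R0 := CInt (radial_integrand g x 0) a rho) in HJ.
  set (Arho := CInt (angular_integrand g x rho) 0 (2 * PI)) in *.
  set (Aa := CInt (angular_integrand g x a) 0 (2 * PI)) in *.
  replace Arho with ((R0 - R0 + Arho - Aa) + Aa)%C by ring. rewrite HJ. ring.
Qed.

Lemma angular_circle_integral_small eps : 0 < rho -> 0 < eps -> exists a, 0 < a < rho /\
  Cmod (CInt (angular_integrand g x a) 0 (2 * PI) - RtoC (2 * PI) * (Ci * g' x))%C <= eps * (2 * PI).
Proof.
  intros Hrho Heps. pose proof PI_RGT_0.
  assert (Hx : Cmod (x - x)%C <= rho) by (unfold Cminus; rewrite Cplus_opp_r, Cmod_0; lra).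
  destruct (is_derive_C_approx g x (g' x) (g_derive x Hx) eps Heps) as [del [Hdel Happrox]].
  set (a := Rmin (del / 2) (rho / 2)).
  assert (Ha : 0 < a <= del / 2 /\ a <= rho / 2)
    by (unfold a; repeat split; [apply Rmin_pos; lra | apply Rmin_l | apply Rmin_r]).
  exists a. split; [lra|].
  assert (Hnear : forall v, 0 <= v <= 2 * PI ->
            Cmod (g (x + polar a v) - g x - g' x * polar a v)%C <= eps * a).
  { intros v _.
    assert (Hw : Cmod ((x + polar a v) - x) = a)
      by (replace ((x + polar a v) - x)%C with (polar a v) by ring; apply Cmod_polar; lra).
    replace (g (x + polar a v) - g x - g' x * polar a v)%C
      with (g (x + polar a v) - g x - ((x + polar a v) - x) * g' x)%C by ring.
    eapply Rle_trans; [apply Happrox; rewrite Hw; lra | rewrite Hw; lra]. }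
  pose proof (angular_integral_near_affine (g x) (g' x) (eps * a) a 0 (2 * PI)
                ltac:(lra) ltac:(lra) Hnear) as Hb.
  replace (Cminus (expi (- 0)) (expi (- (2 * PI)))) with (RtoC 0) in Hb
    by (rewrite expi_opp_2PI; ring).
  rewrite Cmult_0_r, Cplus_0_l, Rminus_0_r in Hb.
  replace (eps * a / a) with eps in Hb by (field; lra). exact Hb.
Qed.

Lemma cauchy_formula_derive : 0 < rho ->
  CInt (angular_integrand g x rho) 0 (2 * PI) = (RtoC (2 * PI) * (Ci * g' x))%C.
Proof.
  intros Hrho. pose proof PI_RGT_0.
  set (Z := (CInt (angular_integrand g x rho) 0 (2 * PI) - RtoC (2 * PI) * (Ci * g' x))%C).
  assert (HZ : Cmod Z <= 0).
  { apply Rle_plus_epsilon. intros eps Heps.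
    destruct (angular_circle_integral_small (eps / (2 * PI)) Hrho) as [a [Ha Hsmall]];
      [apply Rdiv_lt_0_compat; lra|].
    unfold Z. rewrite (angular_circle_integral_radius a Ha).
    replace (0 + eps) with (eps / (2 * PI) * (2 * PI)) by (field; lra). exact Hsmall. }
  replace (CInt (angular_integrand g x rho) 0 (2 * PI)) with (Z + RtoC (2 * PI) * (Ci * g' x))%C
    by (unfold Z; ring).
  rewrite (Cmod_eq_0 Z) by (pose proof (Cmod_ge_0 Z); lra). ring.
Qed.

End Polar_Goursat.

Lemma is_derive_Re_along_segment (f : C -> C) (D p h l : C) t :
  is_derive (K:=C_AbsRing) (V:=C_NormedModule) f (p + RtoC t * h)%C l ->
  is_derive (fun s => Re (Cconj D * f (p + RtoC s * h)))%C t (Re (Cconj D * (h * l)))%C.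
Proof.
  intros Hd. apply is_derive_Reals. intros eps Heps.
  pose proof (Cmod_ge_0 D); pose proof (Cmod_ge_0 h).
  set (e1 := eps / (2 * (Cmod D * Cmod h + 1))).
  assert (He1 : 0 < e1) by (apply Rdiv_lt_0_compat; nra).
  destruct (is_derive_C_approx f _ l Hd e1 He1) as [del [Hdel Happrox]].
  exists (mkposreal _ (Rdiv_lt_0_compat del (Cmod h + 1) Hdel ltac:(lra))).
  intros s Hs0 Hs; simpl in Hs.
  set (z := (p + RtoC t * h)%C). set (w := (p + RtoC (t + s) * h)%C).
  assert (Hwz : (w - z)%C = (RtoC s * h)%C) by (unfold w, z; rewrite RtoC_plus; ring).
  assert (Hdist : Cmod (w - z) = Rabs s * Cmod h) by (rewrite Hwz, Cmod_mult, Cmod_R; reflexivity).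
  assert (Hclose : Cmod (w - z) < del).
  { rewrite Hdist. apply Rle_lt_trans with (Rabs s * (Cmod h + 1)); [pose proof (Rabs_pos s); nra|].
    apply Rlt_le_trans with (del / (Cmod h + 1) * (Cmod h + 1)).
    - apply Rmult_lt_compat_r; lra.
    - right; field; lra. }
  set (X := (f w - f z - (w - z) * l)%C).
  assert (Hincr : Re (Cconj D * f w)%C - Re (Cconj D * f z)%C
                  = s * Re (Cconj D * (h * l))%C + Re (Cconj D * X)%C).
  { replace (f w) with (f z + RtoC s * (h * l) + X)%C by (unfold X; rewrite Hwz; ring).
    rewrite !Cmult_plus_distr_l, !re_plus.
    replace (Cconj D * (RtoC s * (h * l)))%C with (RtoC s * (Cconj D * (h * l)))%C by ring.
    rewrite re_scal_l. ring. }
  fold z w. rewrite Hincr.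
  replace ((s * Re (Cconj D * (h * l))%C + Re (Cconj D * X)%C) / s - Re (Cconj D * (h * l))%C)
    with (Re (Cconj D * X)%C / s) by (field; exact Hs0).
  unfold Rdiv. rewrite Rabs_mult, Rabs_inv.
  assert (Hs1 : 0 < Rabs s) by (apply Rabs_pos_lt, Hs0).
  apply Rle_lt_trans with (Cmod D * (e1 * (Rabs s * Cmod h)) * / Rabs s).
  - apply Rmult_le_compat_r; [apply Rlt_le, Rinv_0_lt_compat, Hs1|].
    eapply Rle_trans; [apply re_le_Cmod|]. rewrite Cmod_mult, Cmod_conj.
    apply Rmult_le_compat_l; [apply Cmod_ge_0|]. rewrite <- Hdist. apply Happrox, Hclose.
  - replace (Cmod D * (e1 * (Rabs s * Cmod h)) * / Rabs s) with (e1 * (Cmod D * Cmod h))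
      by (field; lra).
    unfold e1. apply Rle_lt_trans with (eps / 2); [|lra].
    apply Rle_trans with (eps / (2 * (Cmod D * Cmod h + 1)) * (Cmod D * Cmod h + 1)).
    + apply Rmult_le_compat_l; [exact (Rlt_le _ _ He1) | lra].
    + right; field; nra.
Qed.

Lemma Cmod_sub_le_of_derive_bound (f f' : C -> C) (p h : C) (K : R) :
  (forall t, 0 <= t <= 1 ->
     is_derive (K:=C_AbsRing) (V:=C_NormedModule) f (p + RtoC t * h)%C (f' (p + RtoC t * h)%C)
     /\ Cmod (f' (p + RtoC t * h)%C) <= K) ->
  Cmod (f (p + h) - f p)%C <= K * Cmod h.
Proof.
  intros Hf. set (D := (f (p + h) - f p)%C).
  destruct (MVT_gen (fun s => Re (Cconj D * f (p + RtoC s * h)))%C 0 1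
              (fun s => Re (Cconj D * (h * f' (p + RtoC s * h)%C)))%C) as [c [Hc Hmvt]];
    rewrite ?Rmin_left, ?Rmax_right in * by lra.
  - intros s Hs. apply is_derive_Re_along_segment, Hf. lra.
  - intros s Hs. apply continuity_pt_filterlim, (ex_derive_continuous (K:=R_AbsRing) (V:=R_NormedModule)).
    eexists. apply is_derive_Re_along_segment, Hf, Hs.
  - assert (HD2 : Re (Cconj D * f (p + RtoC 1 * h))%C - Re (Cconj D * f (p + RtoC 0 * h))%C
                  = Cmod D ^ 2).
    { rewrite Cmult_1_l, Cmult_0_l, Cplus_0_r. unfold Rminus. rewrite <- re_opp, <- re_plus.
      replace (Cconj D * f (p + h) + - (Cconj D * f p))%C with (D * Cconj D)%C
        by (unfold D; ring).
      rewrite <- Cmod2_conj, re_RtoC. reflexivity. }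
    destruct (Hf c Hc) as [_ HK].
    assert (Hder : Re (Cconj D * (h * f' (p + RtoC c * h)%C))%C <= Cmod D * (Cmod h * K)).
    { eapply Rle_trans; [apply Rle_abs|]. eapply Rle_trans; [apply re_le_Cmod|].
      rewrite !Cmod_mult, Cmod_conj. apply Rmult_le_compat_l; [apply Cmod_ge_0|].
      apply Rmult_le_compat_l; [apply Cmod_ge_0 | exact HK]. }
    rewrite HD2, Rminus_0_r, Rmult_1_r in Hmvt.
    pose proof (Cmod_ge_0 D); pose proof (Cmod_ge_0 h).
    assert (0 <= K) by (eapply Rle_trans; [apply Cmod_ge_0 | exact HK]).
    fold D. destruct (Req_dec (Cmod D) 0) as [HD0 | HD0]; [nra|].
    apply Rmult_le_reg_l with (Cmod D); [lra | nra].
Qed.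

(* Subtract the Cauchy formulas at [x1] and [x2] on circles of radius [rho]; the integrands
   differ by [f(w + (x1 - x2)) - f(w)], bounded by the mean value inequality. *)
Lemma Cmod_derive_sub_le (f f' : C -> C) (x1 x2 : C) (rho K : R) :
  0 < rho -> Cmod (x1 - x2) <= rho ->
  (forall w, Cmod (w - x2) <= 2 * rho ->
     is_derive (K:=C_AbsRing) (V:=C_NormedModule) f w (f' w) /\ Cmod (f' w) <= K) ->
  Cmod (f' x1 - f' x2) <= K * Cmod (x1 - x2) / rho.
Proof.
  intros Hrho Hx Hf. pose proof PI_RGT_0.
  assert (Hd2 : forall w, Cmod (w - x2) <= rho -> is_derive (K:=C_AbsRing) (V:=C_NormedModule) f w (f' w))
    by (intros w Hw; apply Hf; lra).
  assert (Hd1 : forall w, Cmod (w - x1) <= rho -> is_derive (K:=C_AbsRing) (V:=C_NormedModule) f w (f' w)).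
  { intros w Hw. apply Hf. replace (w - x2)%C with ((w - x1) + (x1 - x2))%C by ring.
    eapply Rle_trans; [apply Cmod_triangle | lra]. }
  pose proof (is_CInt_minus _ _ _ _ _ _
    (CInt_correct _ _ _ (ex_CInt_angular f f' x1 rho Hd1 rho 0 (2 * PI) (conj Hrho (Rle_refl rho))))
    (CInt_correct _ _ _ (ex_CInt_angular f f' x2 rho Hd2 rho 0 (2 * PI) (conj Hrho (Rle_refl rho)))))
    as HI.
  rewrite (cauchy_formula_derive f f' x1 rho Hd1 Hrho), (cauchy_formula_derive f f' x2 rho Hd2 Hrho) in HI.
  apply (Cmod_is_CInt_le _ 0 (2 * PI) _ (K * Cmod (x1 - x2) / rho) ltac:(lra)) in HI.
  - replace (RtoC (2 * PI) * (Ci * f' x1) - RtoC (2 * PI) * (Ci * f' x2))%C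
      with (RtoC (2 * PI) * Ci * (f' x1 - f' x2))%C in HI by ring.
    rewrite !Cmod_mult, Cmod_Ci, Cmod_R, Rabs_pos_eq, Rminus_0_r in HI by lra. nra.
  - intros t _. unfold angular_integrand.
    replace (Ci * f (x1 + polar rho t) * expi (- t) * RtoC (/ rho)
             - Ci * f (x2 + polar rho t) * expi (- t) * RtoC (/ rho))%C
      with (Ci * (f (x2 + polar rho t + (x1 - x2)) - f (x2 + polar rho t)) * expi (- t) * RtoC (/ rho))%C
      by (replace (x2 + polar rho t + (x1 - x2))%C with (x1 + polar rho t)%C by ring; ring).
    rewrite !Cmod_mult, Cmod_Ci, Cmod_expi, Cmod_R, Rabs_pos_eq, Rmult_1_l, Rmult_1_r
      by (apply Rlt_le, Rinv_0_lt_compat, Hrho).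
    apply Rmult_le_compat_r; [apply Rlt_le, Rinv_0_lt_compat, Hrho|].
    apply (Cmod_sub_le_of_derive_bound f f'). intros s Hs. apply Hf.
    replace (x2 + polar rho t + RtoC s * (x1 - x2) - x2)%C
      with (polar rho t + RtoC s * (x1 - x2))%C by ring.
    eapply Rle_trans; [apply Cmod_triangle|].
    rewrite Cmod_polar, Cmod_mult, Cmod_R, Rabs_pos_eq by lra.
    pose proof (Cmod_ge_0 (x1 - x2)). nra.
Qed.

Lemma increasing_seq_to_one (P : R -> Prop) :
  (forall rho, rho < 1 -> exists r, rho < r < 1 /\ P r) ->
  exists r : nat -> R, (forall n, 0 < r n < 1 /\ P (r n)) /\
    (forall n, r n < r (S n)) /\ is_lim_seq r 1.
Proof.
  intros HP.
  set (pick := fun rho => epsilon (inhabits 0) (fun r => rho < 1 -> rho < r < 1 /\ P r)).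
  assert (Hpick : forall rho, rho < 1 -> rho < pick rho < 1 /\ P (pick rho)).
  { intros rho Hrho. apply (epsilon_spec (inhabits 0) (fun r => rho < 1 -> rho < r < 1 /\ P r)); [|exact Hrho].
    destruct (HP rho Hrho) as [r Hr]. exists r. intros _. exact Hr. }
  assert (Hgap : forall n, 0 <= 1 - / INR (S n) < 1).
  { intros n. rewrite S_INR. pose proof (pos_INR n).
    assert (0 < / (INR n + 1)) by (apply Rinv_0_lt_compat; lra).
    assert (/ (INR n + 1) <= 1) by (rewrite <- Rinv_1; apply Rinv_le_contravar; lra). lra. }
  set (r := fix r (n : nat) : R :=
         match n with O => pick 0 | S m => pick (Rmax (r m) (1 - / INR (S (S m)))) end).
  assert (Hr : forall n, r n < 1 /\ P (r n)).
  { induction n as [|n IH].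
    - destruct (Hpick 0) as [[_ H1] H2]; [lra|]. split; assumption.
    - destruct (Hpick (Rmax (r n) (1 - / INR (S (S n))))) as [[_ H1] H2];
        [apply Rmax_lub_lt; [apply IH | apply Hgap]|].
      split; assumption. }
  assert (Hstep : forall n, Rmax (r n) (1 - / INR (S (S n))) < r (S n)).
  { intros n. destruct (Hpick (Rmax (r n) (1 - / INR (S (S n))))) as [[H1 _] _];
      [apply Rmax_lub_lt; [apply Hr | apply Hgap]|].
    exact H1. }
  assert (Hlow : forall n, 1 - / INR (S n) < r n).
  { intros [|n].
    - replace (1 - / INR 1) with 0 by (simpl; field). destruct (Hpick 0) as [[H1 _] _]; [lra|].
      exact H1.
    - pose proof (Hstep n); pose proof (Rmax_r (r n) (1 - / INR (S (S n)))). lra. }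
  exists r. split; [|split].
  - intros n. pose proof (Hlow n); pose proof (Hgap n). split; [split; [lra | apply Hr] | apply Hr].
  - intros n. pose proof (Hstep n); pose proof (Rmax_l (r n) (1 - / INR (S (S n)))). lra.
  - apply is_lim_seq_le_le with (fun n => 1 - / INR (S n)) (fun _ => 1).
    + intros n. pose proof (Hlow n); pose proof (Hr n). lra.
    + replace (Finite 1) with (Rbar_minus 1 0) by (simpl; f_equal; ring).
      apply is_lim_seq_minus'; [apply is_lim_seq_const|].
      apply (is_lim_seq_incr_1 (fun n => / INR n)).
      replace (Finite 0) with (Rbar_inv p_infty) by reflexivity.
      apply is_lim_seq_inv; [apply is_lim_seq_INR | discriminate].
    + apply is_lim_seq_const.
Qed.

Lemma not_little_bloch_radii (g g' : C -> C) : deriv_on_disk g g' -> ~ little_bloch g g' ->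
  exists eps, 0 < eps /\ forall rho, rho < 1 -> exists r, rho < r < 1 /\
    exists t, 0 <= t < 2 * PI /\ eps <= (1 - r ^ 2) * Cmod (g' (polar r t)).
Proof.
  intros HD Hnot. apply NNPP. intros Hno. apply Hnot. split; [exact HD|].
  intros eps Heps. apply NNPP. intros Hrho. apply Hno. exists eps. split; [exact Heps|].
  intros rho Hrho1. apply NNPP. intros Hz. apply Hrho.
  exists (Rmax rho 0). split; [apply Rmax_lub_lt; lra|].
  intros z Hz1 Hz2. apply Rnot_le_lt. intros Hle. apply Hz.
  pose proof (Rmax_l rho 0); pose proof (Rmax_r rho 0).
  exists (Cmod z). split; [lra|].
  destruct (polar_repr z) as [t [Ht Hzt]]; [apply Cmod_gt_0; lra|].
  exists t. rewrite <- Hzt. split; assumption.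
Qed.

Section Bloch_bound.

Variables (g g' : C -> C) (M : R).

Hypothesis g_derive : deriv_on_disk g g'.
Hypothesis g_bloch : forall z, in_disk z -> (1 - Cmod z ^ 2) * Cmod (g' z) <= M.

Lemma bloch_constant_nonneg : 0 <= M.
Proof.
  assert (H0 : in_disk 0%C) by (unfold in_disk; rewrite Cmod_0; lra).
  pose proof (g_bloch _ H0). pose proof (Cmod_ge_0 (g' 0%C)).
  rewrite Cmod_0 in *. lra.
Qed.

Lemma bloch_derive_bound_near (zn w : C) (d : R) : 0 < d -> Cmod zn = 1 - d ->
  Cmod (w - zn) <= d / 2 ->
  is_derive (K:=C_AbsRing) (V:=C_NormedModule) g w (g' w) /\ Cmod (g' w) <= 2 * M / d.
Proof.
  intros Hd Hzn Hw.
  assert (Hmod : Cmod w <= 1 - d / 2).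
  { replace w with ((w - zn) + zn)%C by ring.
    eapply Rle_trans; [apply Cmod_triangle | lra]. }
  pose proof (Cmod_ge_0 w).
  assert (Hin : in_disk w) by (unfold in_disk; lra).
  split; [apply g_derive, Hin|].
  pose proof (g_bloch w Hin). pose proof (Cmod_ge_0 (g' w)).
  assert (d / 2 <= 1 - Cmod w ^ 2) by nra.
  apply Rmult_le_reg_l with (d / 2); [lra|].
  replace (d / 2 * (2 * M / d)) with M by (field; lra). nra.
Qed.

Lemma bloch_derive_lower_bound_on_arc (eps delta r t s : R) :
  0 <= r < 1 -> 0 < delta <= 1 / 8 -> delta * (1 + 16 * M) <= eps / 2 ->
  eps <= (1 - r ^ 2) * Cmod (g' (polar r t)) -> Rabs s <= delta * (1 - r) ->
  delta <= (1 - r) * Cmod (g' (polar r (t + s))).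
Proof.
  intros Hr Hdelta Hsmall Heps Hs.
  set (d := 1 - r) in *. set (zn := polar r t). set (z := polar r (t + s)).
  assert (Hd : 0 < d) by (unfold d; lra).
  pose proof bloch_constant_nonneg as HM.
  assert (Hzn : Cmod zn = 1 - d) by (unfold zn, d; rewrite Cmod_polar; lra).
  assert (Hdist : Cmod (z - zn) <= 2 * delta * d).
  { unfold z, zn. eapply Rle_trans; [apply Cmod_polar_sub_le; lra|].
    rewrite Rminus_eq_0, Rabs_R0. replace (t + s - t) with s by ring.
    pose proof (Rabs_pos s). nra. }
  assert (Hlip : Cmod (g' z - g' zn) <= 2 * M / d * Cmod (z - zn) / (d / 4)).
  { apply (Cmod_derive_sub_le g g'); [lra | nra |].
    intros w Hw. apply (bloch_derive_bound_near zn w d Hd Hzn). lra. }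
  assert (Hlip' : d * Cmod (g' z - g' zn) <= 16 * M * delta).
  { replace (16 * M * delta) with (d * (2 * M / d * (2 * delta * d) / (d / 4))) by (field; lra).
    apply Rmult_le_compat_l; [lra|]. eapply Rle_trans; [exact Hlip|].
    unfold Rdiv. apply Rmult_le_compat_r; [apply Rlt_le, Rinv_0_lt_compat; lra|].
    apply Rmult_le_compat_l; [apply Rmult_le_pos; [lra | apply Rlt_le, Rinv_0_lt_compat, Hd] | exact Hdist]. }
  assert (Hzn_big : eps <= 2 * d * Cmod (g' zn)).
  { eapply Rle_trans; [exact Heps|]. apply Rmult_le_compat_r; [apply Cmod_ge_0 | unfold d; nra]. }
  assert (Htri : Cmod (g' zn) <= Cmod (g' z) + Cmod (g' z - g' zn)).
  { replace (g' zn) with (g' z - (g' z - g' zn))%C at 1 by ring.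
    unfold Cminus at 1. eapply Rle_trans; [apply Cmod_triangle|]. rewrite Cmod_opp. lra. }
  fold z. nra.
Qed.

End Bloch_bound.

Theorem lemma5p4 (g g' : C -> C) :
  bloch g g' -> ~ little_bloch g g' ->
  exists delta : R, 0 < delta < PI / 8 /\
  exists (r t : nat -> R),
    (forall n, 0 < r n < 1) /\
    (forall n, r n < r (S n)) /\
    is_lim_seq r 1 /\
    (forall n, 0 <= t n < 2 * PI) /\
    (forall (n : nat) (s : R),
       - (delta * (1 - r n)) <= s <= delta * (1 - r n) ->
       (1 - r n) * Cmod (g' (polar (r n) (t n + s))) >= delta).
Proof.
  intros [HD [M HM]] Hnot.
  pose proof (bloch_constant_nonneg g' M HM) as HM0.
  destruct (not_little_bloch_radii g g' HD Hnot) as [eps [Heps Hradii]].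
  destruct (increasing_seq_to_one _ Hradii) as [r [Hr [Hincr Hlim]]].
  destruct (choice (fun n t => 0 <= t < 2 * PI /\ eps <= (1 - r n ^ 2) * Cmod (g' (polar (r n) t))))
    as [t Ht]; [intros n; apply Hr|].
  set (delta := Rmin (1 / 8) (eps / (2 * (1 + 16 * M)))).
  assert (Hdelta : 0 < delta <= 1 / 8)
    by (split; [apply Rmin_pos; [lra | apply Rdiv_lt_0_compat; lra] | apply Rmin_l]).
  assert (Hsmall : delta * (1 + 16 * M) <= eps / 2).
  { apply Rle_trans with (eps / (2 * (1 + 16 * M)) * (1 + 16 * M)); [|right; field; lra].
    apply Rmult_le_compat_r; [lra | apply Rmin_r]. }
  exists delta. split; [pose proof PI2_3_2; lra|].
  exists r, t. split; [intros n; apply Hr|]. split; [exact Hincr|]. split; [exact Hlim|].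
  split; [intros n; apply Ht|].
  intros n s Hs. apply Rle_ge.
  apply (bloch_derive_lower_bound_on_arc g g' M HD HM eps); try apply Ht; try lra.
  - destruct (Hr n) as [? _]. lra.
  - apply Rabs_le. lra.
Qed.
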